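(* Let $a_i:\mathbb{R}^n\to\mathbb{R}$ be convex and $L_a$-smooth, and suppose there exist $C_0>0$, $C_1\ge0$ with $\|\nabla a_i(x)\|_2^2\le C_0+C_1|a_i(x)|$ for all $x\in\mathbb{R}^n$. Then for every $\delta>0$, the function $x\mapsto p_\delta(a_i(x))$ is $\left(L_a+\frac{C_1}{4}+\frac{C_0}{4\delta}\right)$-smooth, i.e., its gradient is Lipschitz with this constant in the Euclidean norm.
   Context: $p_\delta(t)=\delta\log(1+\exp(t/\delta))$ is the softplus function with parameter $\delta>0$. A function is $L$-smooth if its gradient is $L$-Lipschitz w.r.t. $\|\cdot\|_2$. *)

From HB Require Import structures.
From mathcomp Require Import all_boot all_order all_algebra.
From mathcomp Require Import all_classical all_reals all_analysis.
Set Implicit Arguments. Unset Strict Implicit. Unset Printing Implicit Defensive.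
Import Order.TTheory GRing.Theory Num.Theory.
Import numFieldNormedType.Exports.
Local Open Scope ring_scope.

(* Euclidean norm on R^n (the default norm on 'rV_n in the library is the sup norm). *)
Definition norm2 {R : realType} {n : nat} (v : 'rV[R]_n) : R :=
  Num.sqrt (\sum_(i < n) v 0 i ^+ 2).

Definition grad {R : realType} {n : nat} (f : 'rV[R]_n -> R) (x : 'rV[R]_n)
  : 'rV[R]_n := \row_(i < n) derive f x (delta_mx 0 i).

Definition L_smooth {R : realType} {n : nat} (L : R) (f : 'rV[R]_n -> R) : Prop :=
  (forall x, differentiable f x) /\
  (forall x y, norm2 (grad f x - grad f y) <= L * norm2 (x - y)).

Definition convex_fun {R : realType} {n : nat} (f : 'rV[R]_n -> R) : Prop :=
  forall (x y : 'rV[R]_n) (t : R), 0 <= t -> t <= 1 ->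
    f (t *: x + (1 - t) *: y) <= t * f x + (1 - t) * f y.

Definition softplus {R : realType} (delta t : R) : R :=
  delta * ln (1 + expR (t / delta)).

From HB Require Import structures.
From mathcomp Require Import all_boot all_order all_algebra.
From mathcomp Require Import all_classical all_reals all_analysis.
From mathcomp Require Import ring lra.
Import Order.TTheory GRing.Theory Num.Theory.
Import numFieldNormedType.Exports.
Local Open Scope ring_scope.

Set Implicit Arguments. Unset Strict Implicit. Unset Printing Implicit Defensive.

(* The gradient of [softplus d \o a] is [sigmoid (a / d) *: grad a].  Along a segment its
   increment splits into [sigmoid * (increment of grad a)], at most [La |x - y|] since
   [0 < sigmoid < 1], plus [(increment of sigmoid) * grad a].  By the mean value theorem the
   latter is controlled by the curvature [sigmoid' (a / d) / d * |grad a|^2], which is at most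
   [C1 / 4 + C0 / (4 d)] because [sigmoid' <= 1/4] and [|u| sigmoid' u <= 1/4].  As [grad a] is
   only Lipschitz, the mean value point and the base point differ, which costs an error
   quadratic in the step length; subdividing the segment into [N] steps makes the total error
   [O(1/N)]. *)

Section Sigmoid.
Context {R : realType}.
Implicit Types u : R.

Definition sigmoid u : R := expR u / (1 + expR u).

Definition dsigmoid u : R := sigmoid u * (1 - sigmoid u).

Lemma onePexpR_neq0 u : 1 + expR u != 0.
Proof. by rewrite gt_eqF // addr_gt0 ?expR_gt0. Qed.

Lemma sigmoid_gt0 u : 0 < sigmoid u.
Proof. by rewrite divr_gt0 ?addr_gt0 ?expR_gt0. Qed.

Lemma sigmoid_lt1 u : sigmoid u < 1.
Proof. by rewrite ltr_pdivrMr ?addr_gt0 ?expR_gt0 // mul1r ltrDr. Qed.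

Lemma dsigmoid_ge0 u : 0 <= dsigmoid u.
Proof. by rewrite mulr_ge0 // ltW ?subr_gt0 ?sigmoid_gt0 ?sigmoid_lt1. Qed.

Lemma dsigmoidE u : dsigmoid u = (expR u + 2 + expR (- u))^-1.
Proof.
have := onePexpR_neq0 u; rewrite /dsigmoid /sigmoid expRN.
have : 0 < expR u by exact: expR_gt0.
move: (expR u) => e e_gt0 e1_neq0.
have e_neq0 : e != 0 by rewrite gt_eqF.
have : (e + 2) * e + 1 != 0 by rewrite gt_eqF //; nra.
by move=> h; field; rewrite e_neq0 h e1_neq0.
Qed.

Lemma is_derive_sigmoid u : is_derive u 1 sigmoid (dsigmoid u).
Proof.
have D1 : is_derive u 1 (cst 1 + expR) (0 + expR u) by exact: is_deriveD.
have D := is_deriveM (is_derive_expR u) (@is_deriveV R (cst 1 + expR) u _ _ (onePexpR_neq0 u) D1).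
apply: is_derive_eq D _; rewrite /dsigmoid /sigmoid /= /GRing.scale /= add0r.
rewrite (_ : (cst 1 + expR) u = 1 + expR u) //.
by have := onePexpR_neq0 u; move: (expR u) => e ?; field.
Qed.

Lemma dsigmoid_le u : dsigmoid u <= 1 / 4.
Proof.
rewrite dsigmoidE -[_^-1]mul1r ler_pdivrMr ?addr_gt0 ?expR_gt0 //.
by have := expR_ge1Dx u; have := expR_ge1Dx (- u); lra.
Qed.

(* [expR (3/2) = expR (3/32) ^+ 16 >= (35/32) ^+ 16], bounded by four squarings. *)
Lemma expR_3half_ge4 : 4 <= expR (3 / 2 : R).
Proof.
have -> : (3 / 2 : R) = 16%:R * (3 / 32) by lra.
rewrite expRM_natl.
have : 35 / 32 <= expR (3 / 32 : R) by have := expR_ge1Dx (3 / 32 : R); lra.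
move: (expR _) => x x_ge; rewrite (_ : 16 = 2 * 2 * 2 * 2)%N // !exprM.
have x2 : 1196 / 1000 <= x ^+ 2 by rewrite expr2; nra.
have x4 : 143 / 100 <= x ^+ 2 ^+ 2 by rewrite [leRHS]expr2; nra.
have x8 : 204 / 100 <= x ^+ 2 ^+ 2 ^+ 2 by rewrite [leRHS]expr2; nra.
by rewrite [leRHS]expr2; nra.
Qed.

Lemma expR_ge_mul4_sub2 u : 4 * u - 2 <= expR u.
Proof.
have -> : expR u = expR (3 / 2) * expR (u - 3 / 2) by rewrite -expRD; congr expR; lra.
have := expR_ge1Dx (u - 3 / 2); have := expR_3half_ge4; have := expR_gt0 (u - 3 / 2).
nra.
Qed.

Lemma normr_mul_dsigmoid_le u : `|u| * dsigmoid u <= 1 / 4.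
Proof.
rewrite dsigmoidE ler_pdivrMr ?addr_gt0 ?expR_gt0 //.
have := expR_ge_mul4_sub2 u; have := expR_ge_mul4_sub2 (- u).
have := expR_gt0 u; have := expR_gt0 (- u).
by case: (ler0P u) => u0; rewrite ?ler0_norm ?gtr0_norm //; lra.
Qed.

Lemma is_derive_softplus (d t : R) : 0 < d ->
  is_derive t 1 (softplus d) (sigmoid (t / d)).
Proof.
move=> d_gt0.
have Dlin : is_derive t 1 (d^-1 \*: id) (d^-1 *: 1) by exact: is_deriveZ.
have Dexp := is_derive1_comp (is_derive_expR _) Dlin.
have D1 : is_derive t 1 (cst 1 + (expR \o (d^-1 \*: id)))
    (0 + expR ((d^-1 \*: id) t) * (d^-1 *: 1)) by apply: is_deriveD.
have pos : 0 < (cst 1 + (expR \o (d^-1 \*: id))) t by rewrite /= addr_gt0 ?expR_gt0.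
have := @is_deriveZ R _ _ _ d _ _ _ (is_derive1_comp (is_derive1_ln pos) D1).
have -> : d \*: (@ln R \o (cst 1 + (expR \o (d^-1 \*: id)))) = softplus d.
  by apply/funext => y; rewrite /softplus /= [y / d]mulrC.
move/is_derive_eq; apply; rewrite /sigmoid /= /GRing.scale /= add0r mulr1 [t / d]mulrC.
rewrite (_ : (cst 1 + (expR \o (d^-1 \*: id))) t = 1 + expR (d^-1 * t)) //.
have := onePexpR_neq0 (d^-1 * t); move: (expR _) => e e1.
by field; rewrite e1 gt_eqF.
Qed.

End Sigmoid.

Section Euclidean.
Variables (R : realType) (n : nat).
Implicit Types u v w : 'rV[R]_n.

Definition dot u v : R := \sum_(i < n) u 0 i * v 0 i.

Lemma dotC u v : dot u v = dot v u.
Proof. by apply: eq_bigr => i _; rewrite mulrC. Qed.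

Lemma dotDr u v w : dot u (v + w) = dot u v + dot u w.
Proof. by rewrite /dot -big_split; apply: eq_bigr => i _; rewrite mxE mulrDr. Qed.

Lemma dotZr c u v : dot u (c *: v) = c * dot u v.
Proof. by rewrite /dot mulr_sumr; apply: eq_bigr => i _; rewrite mxE mulrCA. Qed.

Lemma dotBr u v w : dot u (v - w) = dot u v - dot u w.
Proof. by rewrite dotDr -scaleN1r dotZr mulN1r. Qed.

Lemma dotDl u v w : dot (v + w) u = dot v u + dot w u.
Proof. by rewrite dotC dotDr !(dotC u). Qed.

Lemma dotZl c u v : dot (c *: v) u = c * dot v u.
Proof. by rewrite dotC dotZr dotC. Qed.

Lemma dot_ge0 v : 0 <= dot v v.
Proof. by apply: sumr_ge0 => i _; rewrite -expr2 sqr_ge0. Qed.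

Lemma norm2E v : norm2 v = Num.sqrt (dot v v).
Proof. by rewrite /norm2 /dot; under eq_bigr do rewrite expr2. Qed.

Lemma norm2_ge0 v : 0 <= norm2 v.
Proof. exact: sqrtr_ge0. Qed.

Lemma norm2_sqr v : norm2 v ^+ 2 = dot v v.
Proof. by rewrite norm2E sqr_sqrtr // dot_ge0. Qed.

(* Lagrange's identity: twice the defect is the sum of the squares (u_i v_j - u_j v_i)^2. *)
Lemma dot_sqr_le u v : dot u v ^+ 2 <= dot u u * dot v v.
Proof.
have : 0 <= \sum_(i < n) \sum_(j < n) (u 0 i * v 0 j - u 0 j * v 0 i) ^+ 2.
  by apply: sumr_ge0 => i _; apply: sumr_ge0 => j _; rewrite sqr_ge0.
have -> : \sum_(i < n) \sum_(j < n) (u 0 i * v 0 j - u 0 j * v 0 i) ^+ 2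
    = \sum_(i < n) \sum_(j < n) (u 0 i * u 0 i) * (v 0 j * v 0 j)
    + \sum_(i < n) \sum_(j < n) (u 0 j * u 0 j) * (v 0 i * v 0 i)
    - 2 * \sum_(i < n) \sum_(j < n) (u 0 i * v 0 i) * (u 0 j * v 0 j).
  rewrite mulr_sumr -big_split -sumrB; apply: eq_bigr => i _.
  rewrite mulr_sumr -big_split -sumrB.
  by apply: eq_bigr => j _ /=; ring.
rewrite [in X in _ + X - _]exchange_big -!big_distrlr /dot /=.
by rewrite expr2; lra.
Qed.

Lemma normr_dot_le u v : `|dot u v| <= norm2 u * norm2 v.
Proof.
rewrite !norm2E -sqrtrM ?dot_ge0 // -sqrtr_sqr.
by rewrite ler_wsqrtr // dot_sqr_le.
Qed.

Lemma norm2Z c v : norm2 (c *: v) = `|c| * norm2 v.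
Proof. by rewrite !norm2E dotZl dotZr mulrA -expr2 sqrtrM ?sqr_ge0 // sqrtr_sqr. Qed.

Lemma norm2_distC u v : norm2 (u - v) = norm2 (v - u).
Proof. by rewrite -opprB -scaleN1r norm2Z normrN1 mul1r. Qed.

Lemma norm2_segment x v t t' : t <= t' ->
  norm2 (x + t' *: v - (x + t *: v)) = (t' - t) * norm2 v.
Proof. by move=> tt'; rewrite opprD addrACA subrr add0r -scalerBl norm2Z ger0_norm ?subr_ge0. Qed.

Lemma norm2D u v : norm2 (u + v) <= norm2 u + norm2 v.
Proof.
rewrite -[leRHS]ger0_norm ?addr_ge0 ?norm2_ge0 // -sqrtr_sqr norm2E.
rewrite ler_wsqrtr // dotDl !dotDr (dotC v u) sqrrD !norm2_sqr.
by have := ler_norm (dot u v); have := normr_dot_le u v; lra.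
Qed.

End Euclidean.

Section Gradient.
Variables (R : realType) (n : nat).
Implicit Types (f : 'rV[R]_n -> R) (x z v : 'rV[R]_n).

Lemma diff_gradE f z v : differentiable f z -> 'd f z v = dot (grad f z) v.
Proof.
move=> df; rewrite [in LHS](matrix_sum_delta v) big_ord1 linear_sum.
apply: eq_bigr => i _; rewrite linearZ /= mxE -deriveE // mulrC.
by rewrite (_ : (0 : 'I_1) = ord0) //; apply/val_inj.
Qed.

Lemma grad_comp (g : R -> R) f z dg :
  differentiable f z -> is_derive (f z) 1 g dg -> grad (g \o f) z = dg *: grad f z.
Proof.
move=> df Dg; have dg_diff : differentiable g (f z) by apply/derivable1_diffP; case: Dg.
apply/rowP => i; rewrite !mxE deriveE; last exact: differentiable_comp.
by rewrite diff_comp //= diff1E // derive1E derive_val deriveE // mulrC.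
Qed.

Lemma is_derive_line f x v t : differentiable f (x + t *: v) ->
  is_derive t 1 (fun s => f (x + s *: v)) (dot (grad f (x + t *: v)) v).
Proof.
move=> df; pose line := cst x + ( *:%R^~ v) : R -> 'rV[R]_n.
have Dline : is_diff t line (0 + ( *:%R^~ v)) by exact: is_diffD.
have dline : differentiable line t by case: Dline.
have dcomp : differentiable (f \o line) t by exact: differentiable_comp.
apply: DeriveDef; first exact/derivable1_diffP.
rewrite deriveE // diff_comp // /= (diff_val (is_diff_def := Dline)) /=.
by rewrite add0r scale1r diff_gradE.
Qed.

End Gradient.

Lemma le_of_local_increment (R : archiFieldType) (phi : R -> R) (A B : R) :
  (forall s t, 0 <= s -> s <= t -> t <= 1 ->
     phi t - phi s <= (t - s) * (A + B * (t - s))) ->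
  phi 1 - phi 0 <= A.
Proof.
move=> local; apply/ler_addgt0Pr => e e_gt0.
pose N := (Num.truncn (`|B| / e)).+1.
have N_gt0 : (0 : R) < N%:R by rewrite ltr0n.
pose u k := phi (k%:R / N%:R).
have -> : phi 1 - phi 0 = \sum_(0 <= k < N) (u k.+1 - u k).
  by rewrite telescope_sumr // /u mul0r divff ?gt_eqF.
apply: le_trans (_ : \sum_(0 <= k < N) N%:R^-1 * (A + B * N%:R^-1) <= _).
  apply: ler_sum_nat => k /andP[_ kN].
  have step : k.+1%:R / N%:R - k%:R / N%:R = N%:R^-1 :> R.
    by rewrite -mulrBl -natr1 addrAC subrr add0r mul1r.
  rewrite -step; apply: local.
  - by rewrite divr_ge0 // ltW.
  - by rewrite ler_pM2r ?invr_gt0 // ler_nat.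
  - by rewrite ler_pdivrMr // mul1r ler_nat.
rewrite sumr_const_nat -[_ *+ (N - 0)]mulr_natl subn0 mulrA mulfV ?gt_eqF // mul1r lerD2l.
have : `|B| / e < N%:R by exact: truncnS_gt.
rewrite ltr_pdivrMr // => lt_B.
apply: le_trans (ler_norm _) _.
by rewrite normrM normfV (gtr0_norm N_gt0) ler_pdivrMr // mulrC ltW.
Qed.

Section SoftplusComposition.
Variables (R : realType) (n : nat) (a : 'rV[R]_n -> R) (La C0 C1 d : R).
Hypothesis a_diff : forall z, differentiable a z.
Hypothesis grad_lip : forall x y, norm2 (grad a x - grad a y) <= La * norm2 (x - y).
Hypothesis grad_sqr_le : forall z, norm2 (grad a z) ^+ 2 <= C0 + C1 * `|a z|.
Hypotheses (d_gt0 : 0 < d) (C0_ge0 : 0 <= C0) (C1_ge0 : 0 <= C1).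
Implicit Types (x v w z : 'rV[R]_n) (s t : R).

Lemma grad_lip_normr x y : norm2 (grad a x - grad a y) <= `|La| * norm2 (x - y).
Proof. by apply: le_trans (grad_lip x y) _; rewrite ler_wpM2r ?norm2_ge0 ?ler_norm. Qed.

Lemma norm2_grad_segment_le x v s : 0 <= s <= 1 ->
  norm2 (grad a (x + s *: v)) <= norm2 (grad a x) + `|La| * norm2 v.
Proof.
case/andP=> s_ge0 s_le1.
rewrite -[grad a (x + _)](addrNK (grad a x)) addrC.
apply: le_trans (norm2D _ _) _; rewrite lerD2l.
apply: le_trans (grad_lip_normr _ _) _; rewrite addrAC subrr add0r norm2Z.
by rewrite ler_wpM2l // ger0_norm // ler_piMl ?norm2_ge0.
Qed.

(* [dsigmoid (t / d) / d] is the second derivative of [softplus d] at [t]. *)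
Lemma dsigmoid_grad_sqr_le z :
  dsigmoid (a z / d) / d * norm2 (grad a z) ^+ 2 <= C1 / 4 + C0 / (4 * d).
Proof.
set Q := dsigmoid (a z / d).
have Q_ge0 : 0 <= Q by exact: dsigmoid_ge0.
have Q_le : Q <= 1 / 4 by exact: dsigmoid_le.
have aQ_le : `|a z| * Q <= d / 4.
  have := normr_mul_dsigmoid_le (a z / d).
  by rewrite normrM normfV (gtr0_norm d_gt0) mulrAC ler_pdivrMr // -/Q; lra.
have QX_le := ler_wpM2l Q_ge0 (grad_sqr_le z).
rewrite mulrAC ler_pdivrMr // (_ : (C1 / 4 + C0 / (4 * d)) * d = C0 / 4 + C1 * (d / 4)).
  have := ler_wpM2l C1_ge0 aQ_le; have := ler_wpM2r C0_ge0 Q_le.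
  rewrite mulrDr in QX_le; nra.
by field; rewrite gt_eqF.
Qed.

Lemma is_derive_sigmoid_segment x v t :
  is_derive t 1 (fun s => sigmoid (a (x + s *: v) / d))
    (dsigmoid (a (x + t *: v) / d) / d * dot (grad a (x + t *: v)) v).
Proof.
have Dline := is_derive_line (a_diff (x + t *: v)).
have := is_derive1_comp (is_derive_sigmoid _) (@is_deriveZ R _ _ _ d^-1 _ _ _ Dline).
have -> : sigmoid \o (d^-1 \*: (fun s => a (x + s *: v))) =
    (fun s => sigmoid (a (x + s *: v) / d)) by apply/funext => s /=; rewrite mulrC.
by move/is_derive_eq; apply; rewrite /= /GRing.scale /= [a _ / d]mulrC mulrA.
Qed.

Lemma sigmoid_segment_MVT x v t0 t1 : t0 <= t1 ->
  exists2 xi, t0 <= xi <= t1 &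
    sigmoid (a (x + t1 *: v) / d) - sigmoid (a (x + t0 *: v) / d)
    = (t1 - t0) * (dsigmoid (a (x + xi *: v) / d) / d * dot (grad a (x + xi *: v)) v).
Proof.
move=> t01; have [|xi xi_in ->] := MVT_segment t01 (fun t _ => is_derive_sigmoid_segment x v t).
  by apply: derivable_within_continuous => t _; case: (is_derive_sigmoid_segment x v t).
by exists xi; [move: xi_in; rewrite in_itv | rewrite mulrC].
Qed.

Lemma sigmoid_increment_dot_le x v w t0 t1 : 0 <= t0 -> t0 <= t1 -> t1 <= 1 ->
  (sigmoid (a (x + t1 *: v) / d) - sigmoid (a (x + t0 *: v) / d))
    * dot w (grad a (x + t0 *: v))
  <= (t1 - t0) * (norm2 w * norm2 v * (C1 / 4 + C0 / (4 * d))
     + norm2 w * norm2 v * ((norm2 (grad a x) + `|La| * norm2 v) / (4 * d) * (`|La| * norm2 v))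
       * (t1 - t0)).
Proof.
move=> t0_ge0 t01 t1_le1.
have [xi /andP[t0xi xit1] ->] := sigmoid_segment_MVT x v t01.
set g0 := grad a (x + t0 *: v); set gx := grad a (x + xi *: v).
set q := dsigmoid (a (x + xi *: v) / d) / d; set X := norm2 gx.
set h := t1 - t0; set nw := norm2 w; set nv := norm2 v.
set M := (norm2 (grad a x) + `|La| * nv) / (4 * d).
have h_ge0 : 0 <= h by rewrite subr_ge0.
have nw_ge0 : 0 <= nw by exact: norm2_ge0.
have nv_ge0 : 0 <= nv by exact: norm2_ge0.
have q_ge0 : 0 <= q by rewrite divr_ge0 ?dsigmoid_ge0 ?ltW.
have X_ge0 : 0 <= X by exact: norm2_ge0.
have qX_le : q * X <= M.
  have X_le : X <= norm2 (grad a x) + `|La| * nv.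
    by apply: norm2_grad_segment_le; apply/andP; split; lra.
  have q_le : q <= 1 / (4 * d).
    rewrite /q (_ : 1 / (4 * d) = 1 / 4 / d); last by field; rewrite gt_eqF.
    by rewrite ler_pM2r ?invr_gt0 // dsigmoid_le.
  by apply: le_trans (ler_pM q_ge0 X_ge0 q_le X_le) _; rewrite /M mulrC mul1r.
have g0_le : norm2 g0 <= X + `|La| * (h * nv).
  rewrite -[g0](addrNK gx) addrC; apply: le_trans (norm2D _ _) _; rewrite lerD2l.
  apply: le_trans (grad_lip_normr _ _) _; rewrite norm2_distC norm2_segment //.
  by rewrite ler_wpM2l // ler_wpM2r // /h; lra.
have dots : dot gx v * dot w g0 <= X * nv * (nw * norm2 g0).
  apply: le_trans (ler_norm _) _; rewrite normrM.
  by apply: ler_pM; rewrite ?normr_ge0 ?normr_dot_le.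
have qXg0_le : q * X * norm2 g0 <= C1 / 4 + C0 / (4 * d) + M * (`|La| * (h * nv)).
  apply: le_trans (ler_wpM2l (mulr_ge0 q_ge0 X_ge0) g0_le) _.
  rewrite mulrDr; apply: lerD; first by rewrite -mulrA -expr2 dsigmoid_grad_sqr_le.
  by rewrite ler_wpM2r // mulr_ge0 // mulr_ge0.
have := ler_wpM2l q_ge0 dots; have := ler_wpM2l (mulr_ge0 nw_ge0 nv_ge0) qXg0_le.
by have := h_ge0; nra.
Qed.

Lemma softplus_grad_increment_le x v w t0 t1 : 0 <= t0 -> t0 <= t1 -> t1 <= 1 ->
  dot w (sigmoid (a (x + t1 *: v) / d) *: grad a (x + t1 *: v))
  - dot w (sigmoid (a (x + t0 *: v) / d) *: grad a (x + t0 *: v))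
  <= (t1 - t0) * (norm2 w * norm2 v * (La + C1 / 4 + C0 / (4 * d))
     + norm2 w * norm2 v * ((norm2 (grad a x) + `|La| * norm2 v) / (4 * d) * (`|La| * norm2 v))
       * (t1 - t0)).
Proof.
move=> t0_ge0 t01 t1_le1.
set s0 := sigmoid (a (x + t0 *: v) / d); set s1 := sigmoid (a (x + t1 *: v) / d).
set g0 := grad a (x + t0 *: v); set g1 := grad a (x + t1 *: v).
have -> : dot w (s1 *: g1) - dot w (s0 *: g0) = s1 * dot w (g1 - g0) + (s1 - s0) * dot w g0.
  by rewrite !dotZr dotBr; ring.
have gradA : s1 * dot w (g1 - g0) <= (t1 - t0) * (norm2 w * norm2 v * La).
  apply: le_trans (ler_norm _) _; rewrite normrM gtr0_norm ?sigmoid_gt0 //.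
  apply: le_trans (ler_piMl (normr_ge0 _) (ltW (sigmoid_lt1 _))) _.
  apply: le_trans (normr_dot_le _ _) _.
  have := ler_wpM2l (norm2_ge0 w) (grad_lip (x + t1 *: v) (x + t0 *: v)).
  by rewrite norm2_segment //; lra.
have := @sigmoid_increment_dot_le x v w t0 t1 t0_ge0 t01 t1_le1.
by rewrite -/s0 -/s1 -/g0; lra.
Qed.

Lemma softplus_grad_lipschitz x y :
  norm2 (sigmoid (a x / d) *: grad a x - sigmoid (a y / d) *: grad a y)
  <= (La + C1 / 4 + C0 / (4 * d)) * norm2 (x - y).
Proof.
pose G z := sigmoid (a z / d) *: grad a z.
rewrite -/(G x) -/(G y) (norm2_distC (G x)) (norm2_distC x).
set v := y - x; set w := G y - G x; set K := La + C1 / 4 + C0 / (4 * d).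
have Kv_ge0 : 0 <= K * norm2 v.
  have := le_trans (norm2_ge0 _) (grad_lip y x).
  have : 0 <= (C1 / 4 + C0 / (4 * d)) * norm2 v.
    by rewrite mulr_ge0 ?norm2_ge0 ?addr_ge0 ?divr_ge0 ?mulr_ge0 // ltW.
  by rewrite /K -/v; lra.
pose phi s := dot w (G (x + s *: v)).
have : phi 1 - phi 0 <= norm2 w * norm2 v * K.
  apply: le_of_local_increment => s t s_ge0 st t_le1.
  exact: softplus_grad_increment_le.
rewrite /phi scale1r scale0r addr0 /v addrCA subrr addr0 -dotBr -norm2_sqr.
by have := norm2_ge0 w; nra.
Qed.

End SoftplusComposition.

Theorem proposition3 (R : realType) (n : nat) (a : 'rV[R]_n -> R)
  (La C0 C1 : R) :
  convex_fun a -> L_smooth La a ->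
  0 < C0 -> 0 <= C1 ->
  (forall x, norm2 (grad a x) ^+ 2 <= C0 + C1 * `|a x|) ->
  forall delta : R, 0 < delta ->
    L_smooth (La + C1 / 4 + C0 / (4 * delta)) (fun x => softplus delta (a x)).
Proof.
move=> _ [a_diff grad_lip] C0_gt0 C1_ge0 grad_sqr_le d d_gt0.
have softplus_diff t : differentiable (softplus d) t.
  by apply/derivable1_diffP; case: (is_derive_softplus t d_gt0).
have grad_softplusE z :
    grad (fun x => softplus d (a x)) z = sigmoid (a z / d) *: grad a z.
  exact: grad_comp (a_diff z) (is_derive_softplus _ d_gt0).
split=> [x | x y]; first exact: differentiable_comp.
rewrite !grad_softplusE.
exact: softplus_grad_lipschitz a_diff grad_lip grad_sqr_le d_gt0 (ltW C0_gt0) C1_ge0 x y.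
Qed.
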